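(* Let $n\ge 2$, $\mathcal{O}\in\mathcal{C}_{sp}^{(n)}$, $\nu\in(0,1]$, and $\mathcal{J}\in\mathbf{J}_{\mathcal{O}}^{\nu}$. Then there is a constant $\mu_{n,\nu}$ depending only on $n$ and $\nu$ such that $\|\mathcal{J}\|_2\le\mu_{n,\nu}$, $0\le\mu_{n,\nu}<1$.
   Context: $\imath=\sqrt{-1}$. For $1\le i<j\le n$ and real $\phi,\alpha$, $R(i,j,\phi,\alpha)$ is the $n\times n$ matrix equal to $I_n$ except for entries $(i,i)=(j,j)=\cos\phi$, $(i,j)=-e^{\imath\alpha}\sin\phi$, $(j,i)=e^{-\imath\alpha}\sin\phi$. Let $N=n(n-1)/2$. For $A=(a_{st})\in\mathbb{C}^{n\times n}$ let $c_t=(a_{1t},\dots,a_{t-1,t})^T$, $r_s=(a_{s1},\dots,a_{s,s-1})$ ($2\le s,t\le n$) and $\mathrm{ve}(A)=[c_2^T,\dots,c_n^T,r_2,\dots,r_n]^T\in\mathbb{C}^{2N}$. Let $\nu_{ij}$ be the linear map on $\mathbb{C}^{n\times n}$ setting entries $(i,j),(j,i)$ to zero. For $U=R(i,j,\phi,\alpha)$ the Jacobi annihilator $\mathcal{R}_{ij}(U)$ is the $2N\times 2N$ matrix with $\mathcal{R}_{ij}(U)\mathrm{ve}(A)=\mathrm{ve}(\nu_{ij}(U^*AU))$ for all $A$. For $\nu\in[0,1]$, $\mathbf{R}_{ij}^{\nu}=\{\mathcal{R}_{ij}(U): U=R(i,j,\phi,\alpha),\ |\cos\phi|\ge\nu\}$.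 Let $\mathcal{P}_n=\{(r,s):1\le r<s\le n\}$. For an ordering $\mathcal{O}=(i_0,j_0),\dots,(i_{N-1},j_{N-1})$ of $\mathcal{P}_n$ (each pair exactly once), $\mathbf{J}_{\mathcal{O}}^{\nu}=\{\mathcal{R}_{i_{N-1}j_{N-1}}\cdots\mathcal{R}_{i_0j_0}: \mathcal{R}_{i_kj_k}\in\mathbf{R}_{i_kj_k}^{\nu}\}$ is the class of Jacobi operators; $\|\cdot\|_2$ is the spectral norm. Orderings: $\mathcal{C}_c^{(n)}$ is the set of orderings $(1,2),(\tau_3(1),3),(\tau_3(2),3),\dots,(\tau_n(1),n),\dots,(\tau_n(n-1),n)$ with $\tau_j$ a permutation of $\{1,\dots,j-1\}$; $\mathcal{C}_r^{(n)}$ is the set of orderings $(n-1,n),(n-2,\tau_{n-2}(n-1)),(n-2,\tau_{n-2}(n)),\dots,(1,\tau_1(2)),\dots,(1,\tau_1(n))$ with $\tau_i$ a permutation of $\{i+1,\dots,n\}$, $1\le i\le n-2$. The reverse $\mathcal{O}^{\leftarrow}$ of $(i_0,j_0),\dots,(i_r,j_r)$ is $(i_r,j_r),\dots,(i_0,j_0)$. $\overleftarrow{\mathcal{C}}_c^{(n)}$ and $\overleftarrow{\mathcal{C}}_r^{(n)}$ are the sets of orderings whose reverses lie in $\mathcal{C}_c^{(n)}$, resp. $\mathcal{C}_r^{(n)}$, and $\mathcal{C}_{sp}^{(n)}=\mathcal{C}_c^{(n)}\cup\overleftarrow{\mathcal{C}}_c^{(n)}\cup\mathcal{C}_r^{(n)}\cup\overleftarrow{\mathcal{C}}_r^{(n)}$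 (serial orderings with permutations). *)

From HB Require Import structures.
From mathcomp Require Import all_boot all_order all_algebra.
From mathcomp Require Import boolp classical_sets reals trigo.
From mathcomp.real_closed Require Import complex.
Set Implicit Arguments. Unset Strict Implicit. Unset Printing Implicit Defensive.
Import Order.TTheory GRing.Theory Num.Theory.
Local Open Scope ring_scope.
Local Open Scope complex_scope.

(* Indices are 0-based: the paper's index s in {1..n} is s-1 here. *)

Definition dimN (n : nat) : nat := (n * n.-1) %/ 2.

(* strictly-upper pairs (s,t), s < t < n, ordered by t then s:
   this is the order of the entries of c_2, ..., c_n. *)
Definition upairs (n : nat) : seq (nat * nat) :=
  flatten [seq [seq (s, t) | s <- iota 0 t] | t <- iota 0 n].

(* entry (s,t) of a matrix, given by nat indices (0 outside the range) *)
Definition mentry (R : realType) (n : nat) (A : 'M[R[i]]_n) (s t : nat) : R[i] :=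
  match (insub s : option 'I_n), (insub t : option 'I_n) with
  | Some i, Some j => A i j
  | _, _ => 0
  end.

(* ve(A) = [c_2^T, ..., c_n^T, r_2, ..., r_n]^T in C^{2N} *)
Definition ve (R : realType) (n : nat) (A : 'M[R[i]]_n) : 'cV[R[i]]_(dimN n + dimN n) :=
  \col_(k < dimN n + dimN n)
    (if (k < dimN n)%N
     then let p := nth (0%N, 0%N) (upairs n) k in mentry A p.1 p.2
     else let p := nth (0%N, 0%N) (upairs n) (k - dimN n) in mentry A p.2 p.1).

Definition nu_ij (R : realType) (n : nat) (i j : nat) (A : 'M[R[i]]_n) : 'M[R[i]]_n :=
  \matrix_(p, q)
    (if ((p == i :> nat) && (q == j :> nat)) || ((p == j :> nat) && (q == i :> nat))
     then 0 else A p q).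

Definition cexpi (R : realType) (alpha : R) : R[i] := cos alpha +i* sin alpha.

Definition rotm (R : realType) (n : nat) (i j : nat) (phi alpha : R) : 'M[R[i]]_n :=
  \matrix_(p, q)
    (if ((p == i :> nat) && (q == i :> nat)) || ((p == j :> nat) && (q == j :> nat))
     then (cos phi)%:C
     else if (p == i :> nat) && (q == j :> nat) then - (cexpi alpha * (sin phi)%:C)
     else if (p == j :> nat) && (q == i :> nat) then cexpi (- alpha) * (sin phi)%:C
     else if p == q then 1 else 0).

Definition adjm (R : realType) (n : nat) (U : 'M[R[i]]_n) : 'M[R[i]]_n :=
  map_mx (@conjc R) U^T.

Definition is_annihilator (R : realType) (n : nat) (i j : nat) (U : 'M[R[i]]_n)
  (M : 'M[R[i]]_(dimN n + dimN n)) : Prop :=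
  forall A : 'M[R[i]]_n, M *m ve A = ve (nu_ij i j (adjm U *m A *m U)).

Definition annih_class (R : realType) (n : nat) (nu : R) (i j : nat)
  (M : 'M[R[i]]_(dimN n + dimN n)) : Prop :=
  exists phi alpha : R, nu <= `|cos phi| /\ @is_annihilator R n i j (@rotm R n i j phi alpha) M.

(* J belongs to J_O^nu: J = M_{N-1} ... M_0 with M_k in R^nu_{i_k j_k} *)
Definition jacobi_class (R : realType) (n : nat) (nu : R) (O : seq (nat * nat))
  (J : 'M[R[i]]_(dimN n + dimN n)) : Prop :=
  exists Ms : seq 'M[R[i]]_(dimN n + dimN n),
    size Ms = size O /\
    (forall k, (k < size O)%N ->
       @annih_class R n nu (nth (0%N, 0%N) O k).1 (nth (0%N, 0%N) O k).2 (nth 0 Ms k)) /\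
    J = foldl (fun acc M => M *m acc) 1%:M Ms.

Definition in_Cc (n : nat) (O : seq (nat * nat)) : Prop :=
  exists tau : nat -> seq nat,
    (forall t, (1 <= t < n)%N -> perm_eq (tau t) (iota 0 t)) /\
    O = flatten [seq [seq (s, t) | s <- tau t] | t <- iota 1 n.-1].

(* row-cyclic orderings with permutations C_r^(n):
   rows n-2, n-3, ..., 0 (0-based), row i visits (i, tau_i(.)) with tau_i a
   permutation of {i+1, ..., n-1}; for row n-2 this is forced to (n-2,n-1). *)
Definition in_Cr (n : nat) (O : seq (nat * nat)) : Prop :=
  exists tau : nat -> seq nat,
    (forall i, (i < n.-1)%N -> perm_eq (tau i) (iota i.+1 (n - i.+1))) /\
    O = flatten [seq [seq (i, s) | s <- tau i] | i <- rev (iota 0 n.-1)].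

Definition in_Csp (n : nat) (O : seq (nat * nat)) : Prop :=
  in_Cc n O \/ in_Cc n (rev O) \/ in_Cr n O \/ in_Cr n (rev O).

Definition cmod (R : realType) (z : R[i]) : R :=
  Num.sqrt (complex.Re z ^+ 2 + complex.Im z ^+ 2).

Definition vnorm2 (R : realType) (m : nat) (x : 'cV[R[i]]_m) : R :=
  Num.sqrt (\sum_(k < m) cmod (x k 0) ^+ 2).

Definition spec_norm (R : realType) (m : nat) (A : 'M[R[i]]_m) : R :=
  sup [set vnorm2 (A *m x) | x in [set x : 'cV[R[i]]_m | vnorm2 x <= 1]].

(* A Jacobi step [B |-> nu_ij i j (U^* B U)] is a unitary change of basis in the
   plane (i, j) followed by zeroing the two pivot entries, so it lowers the squared
   off-diagonal Frobenius norm off(B) by exactly the mass it annihilates.  As [ve A]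
   lists the off-diagonal entries of [A], |J ve A|^2 = off(A) - (mass annihilated
   by the sweep).  For a serial ordering the annihilated mass is at least
   off(A) / (1 + C) with C depending only on n and nu: split off the index c whose
   pivots (c, s) form a contiguous block.  Since the 2x2 rotations have diagonal
   entries of modulus >= nu, the mass of row and column c just before (or just
   after) that block is bounded by the mass the block annihilates plus the
   off-diagonal mass among the other indices, and induction on n does the rest.
   Hence ||J||^2 <= 1 - 1 / (1 + C). *)

From HB Require Import structures.
From mathcomp Require Import all_boot all_order all_algebra.
From mathcomp Require Import boolp classical_sets reals trigo.
From mathcomp.real_closed Require Import complex.
From mathcomp Require Import lra ring zify.
Set Implicit Arguments. Unset Strict Implicit. Unset Printing Implicit Defensive.
Import Order.TTheory GRing.Theory Num.Theory.
Local Open Scope ring_scope.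
Local Open Scope complex_scope.

Section SquaredModulus.
Context {R : realType}.
Implicit Types (x : R) (z a b c d : R[i]).

Definition sqmod z : R := complex.Re z ^+ 2 + complex.Im z ^+ 2.

Lemma sqmod_ge0 z : 0 <= sqmod z.
Proof. by rewrite addr_ge0 ?sqr_ge0. Qed.

Lemma sqmodM a b : sqmod (a * b) = sqmod a * sqmod b.
Proof. by case: a b => [a1 a2] [b1 b2]; rewrite /sqmod /=; ring. Qed.

Lemma sqmodN z : sqmod (- z) = sqmod z.
Proof. by case: z => a b; rewrite /sqmod /= !sqrrN. Qed.

Lemma sqmodJ z : sqmod z^* = sqmod z.
Proof. by case: z => a b; rewrite /sqmod /= sqrrN. Qed.

Lemma sqmod_real x : sqmod x%:C = x ^+ 2.
Proof. by rewrite /sqmod /= expr0n addr0. Qed.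

Lemma sqmod0 : sqmod 0 = 0.
Proof. by rewrite (sqmod_real 0) expr0n. Qed.

Lemma sqmodE z : (sqmod z)%:C = z * z^*.
Proof.
case: z => a b; rewrite /sqmod /=; apply/eqP; rewrite eq_complex /=.
by apply/andP; split; apply/eqP; ring.
Qed.

Lemma sqmodD_le a b : sqmod (a + b) <= 2 * (sqmod a + sqmod b).
Proof.
case: a b => [a1 a2] [b1 b2]; rewrite /sqmod /=.
by have := sqr_ge0 (a1 - b1); have := sqr_ge0 (a2 - b2); nra.
Qed.

Lemma sqmodB_le a b : sqmod (a - b) <= 2 * (sqmod a + sqmod b).
Proof. by rewrite -(sqmodN b) sqmodD_le. Qed.

Lemma cmod_sqr z : cmod z ^+ 2 = sqmod z.
Proof. by rewrite sqr_sqrtr // sqmod_ge0. Qed.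

Lemma sqmod_unitary2 (z w : R[i]) a b c d :
  sqmod a + sqmod c = 1 -> sqmod b + sqmod d = 1 -> a * b^* + c * d^* = 0 ->
  sqmod (z * a + w * b) + sqmod (z * c + w * d) = sqmod z + sqmod w.
Proof.
move=> ac1 bd1 ortho; apply: complexI.
have ortho' : a^* * b + c^* * d = 0.
  have := congr1 conjc ortho; rewrite rmorph0 rmorphD !rmorphM /= !conjcK => <-.
  by rewrite mulrC [c^* * _]mulrC.
have real_complexD (u v : R) : (u + v)%:C = u%:C + v%:C :> R[i] by rewrite rmorphD.
rewrite [LHS]real_complexD [RHS]real_complexD !sqmodE !rmorphD !rmorphM /=.
transitivity (z * z^* * (a * a^* + c * c^*) + w * w^* * (b * b^* + d * d^*)
  + z * w^* * (a * b^* + c * d^*) + w * z^* * (a^* * b + c^* * d)); first by ring.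
by rewrite -!sqmodE -!real_complexD ac1 bd1 ortho ortho' !mulr1 !mulr0 !addr0.
Qed.

End SquaredModulus.

Section JacobiStep.
Context {R : realType} {n : nat}.
Local Notation C := R[i].
Local Notation M := 'M[C]_n.
Implicit Types (nu : R) (i j p q s : 'I_n) (U B : M).

Definition jacobi_step i j U B : M := nu_ij i j (adjm U *m B *m U).

(* The properties of [rotm i j phi alpha] with [nu <= `|cos phi|] that the bound uses. *)
Definition admissible nu i j U : Prop :=
  [/\ i != j,
      forall p q, (p != i) && (p != j) || (q != i) && (q != j) -> U p q = (p == q)%:R,
      [/\ sqmod (U i i) + sqmod (U i j) = 1, sqmod (U j i) + sqmod (U j j) = 1
        & U i i * (U j i)^* + U i j * (U j j)^* = 0]
    & nu ^+ 2 <= sqmod (U i i) /\ nu ^+ 2 <= sqmod (U j j)].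

Lemma admissible_sym nu i j U : admissible nu i j U -> admissible nu j i U.
Proof.
case=> ij hout [ri rj ortho] [nui nuj]; split => //; first by rewrite eq_sym.
- by move=> p q hpq; apply: hout; rewrite (andbC (p != i)) (andbC (q != i)).
- split; rewrite 1?addrC //.
  have := congr1 conjc ortho; rewrite rmorph0 rmorphD !rmorphM /= !conjcK => <-.
  by rewrite mulrC [U j j * _]mulrC.
Qed.

Lemma jacobi_stepC i j U B : jacobi_step i j U B = jacobi_step j i U B.
Proof. by apply/matrixP => p q; rewrite !mxE orbC. Qed.

Lemma jacobi_stepE i j U B p q : jacobi_step i j U B p q =
  if ((p == i) && (q == j)) || ((p == j) && (q == i)) then 0
  else \sum_b (\sum_a (U a p)^* * B a b) * U b q.
Proof.
rewrite !mxE; case: ifP => // _; apply: eq_bigr => b _; rewrite !mxE.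
by congr (_ * _); apply: eq_bigr => a _; rewrite !mxE.
Qed.

Section Admissible.
Variables (nu : R) (i j : 'I_n) (U : M).
Hypothesis hU : admissible nu i j U.

Lemma admissible_sum (F : 'I_n -> C -> C) q : (forall b, F b 0 = 0) ->
  \sum_b F b (U b q) =
  if (q == i) || (q == j) then F i (U i q) + F j (U j q) else F q 1.
Proof.
case: hU => ij hout _ _ F0; case: ifP => hq.
  rewrite (bigD1 i) //= (bigD1 j) 1?eq_sym //= addrA big1 ?addr0 // => b /andP [bi bj].
  rewrite hout ?bi ?bj //; case: eqP => [eb|_]; last exact: F0.
  by move: hq; rewrite -eb (negbTE bi) (negbTE bj).
have hq' : (q != i) && (q != j) by case/norP: hq => -> ->.
rewrite (bigD1 q) //= big1 ?addr0 => [|b bq]; rewrite hout ?hq' ?orbT //.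
  by rewrite eqxx.
by rewrite (negbTE bq).
Qed.

Lemma admissible_sumr (X : 'I_n -> C) q : \sum_b X b * U b q =
  if (q == i) || (q == j) then X i * U i q + X j * U j q else X q.
Proof. by rewrite (admissible_sum (F := fun b u => X b * u)) ?mulr1 // => b; rewrite mulr0. Qed.

Lemma admissible_suml (Y : 'I_n -> C) p : \sum_a (U a p)^* * Y a =
  if (p == i) || (p == j) then (U i p)^* * Y i + (U j p)^* * Y j else Y p.
Proof.
rewrite (admissible_sum (F := fun a u => u^* * Y a)) => [|a] /=.
  by rewrite rmorph1 mul1r.
by rewrite rmorph0 mul0r.
Qed.

Lemma jacobi_step_out B p q : (p != i) && (p != j) -> (q != i) && (q != j) ->
  jacobi_step i j U B p q = B p q.
Proof.
move=> /andP [/negbTE pi /negbTE pj] /andP [/negbTE qi /negbTE qj].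
by rewrite jacobi_stepE pi pj /= admissible_sumr qi qj /= admissible_suml pi pj.
Qed.

Lemma jacobi_step_row B s q : (s != i) && (s != j) -> (q == i) || (q == j) ->
  jacobi_step i j U B s q = B s i * U i q + B s j * U j q.
Proof.
move=> /andP [/negbTE si /negbTE sj] hq.
by rewrite jacobi_stepE si sj /= admissible_sumr hq !admissible_suml si sj.
Qed.

Lemma jacobi_step_col B s q : (s != i) && (s != j) -> (q == i) || (q == j) ->
  jacobi_step i j U B q s = (U i q)^* * B i s + (U j q)^* * B j s.
Proof.
move=> /andP [/negbTE si /negbTE sj] hq.
by rewrite jacobi_stepE si sj !andbF /= admissible_sumr si sj /= admissible_suml hq.
Qed.

Lemma jacobi_step_row_sqmod B s : (s != i) && (s != j) ->
  sqmod (jacobi_step i j U B s i) + sqmod (jacobi_step i j U B s j) =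
  sqmod (B s i) + sqmod (B s j).
Proof.
move=> hs; rewrite !jacobi_step_row ?eqxx ?orbT //.
by case: hU => _ _ [ri rj ortho] _; apply: sqmod_unitary2.
Qed.

Lemma jacobi_step_col_sqmod B s : (s != i) && (s != j) ->
  sqmod (jacobi_step i j U B i s) + sqmod (jacobi_step i j U B j s) =
  sqmod (B i s) + sqmod (B j s).
Proof.
move=> hs; rewrite !jacobi_step_col ?eqxx ?orbT // ![(_)^* * B _ s]mulrC.
case: hU => _ _ [ri rj ortho] _; apply: sqmod_unitary2; rewrite ?sqmodJ //.
by have := congr1 conjc ortho; rewrite rmorph0 rmorphD !rmorphM.
Qed.

Lemma admissible_sqmod_le1 :
  [/\ sqmod (U i i) <= 1, sqmod (U i j) <= 1, sqmod (U j i) <= 1 & sqmod (U j j) <= 1].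
Proof.
case: hU => _ _ [ri rj _] _.
have := sqmod_ge0 (U i j); have := sqmod_ge0 (U j i).
have := sqmod_ge0 (U i i); have := sqmod_ge0 (U j j).
by move=> *; split; lra.
Qed.

End Admissible.

Lemma jacobi_step_pivot i j U B :
  jacobi_step i j U B i j = 0 /\ jacobi_step i j U B j i = 0.
Proof. by rewrite !jacobi_stepE !eqxx orbT. Qed.

End JacobiStep.

Section OffNorm.
Context {R : realType} {n : nat}.
Local Notation M := 'M[R[i]]_n.
Implicit Types (S T : seq nat) (B : M).

Definition off_sq S B : R :=
  \sum_(p : 'I_n | val p \in S) \sum_(q : 'I_n | (val q \in S) && (p != q)) sqmod (B p q).

Definition rowcol_sq S (c : 'I_n) B : R :=
  \sum_(s : 'I_n | val s \in S) (sqmod (B s c) + sqmod (B c s)).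

Lemma off_sq_ge0 S B : 0 <= off_sq S B.
Proof. by do 2![apply: sumr_ge0 => ? _]; apply: sqmod_ge0. Qed.

Lemma rowcol_sq_ge0 S c B : 0 <= rowcol_sq S c B.
Proof. by apply: sumr_ge0 => s _; rewrite addr_ge0 ?sqmod_ge0. Qed.

Lemma eq_off_sq S T B : S =i T -> off_sq S B = off_sq T B.
Proof.
by move=> eST; apply: eq_big => [p|p _]; rewrite ?eST //; apply: eq_bigl => q; rewrite eST.
Qed.

Lemma eq_rowcol_sq S T c B : S =i T -> rowcol_sq S c B = rowcol_sq T c B.
Proof. by move=> eST; apply: eq_bigl => s; rewrite eST. Qed.

Lemma eq_off_sq_mx S B B' :
  (forall p q : 'I_n, val p \in S -> val q \in S -> p != q -> B p q = B' p q) ->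
  off_sq S B = off_sq S B'.
Proof.
by move=> eB; apply: eq_bigr => p pS; apply: eq_bigr => q /andP [qS pq]; rewrite eB.
Qed.

Lemma rowcol_sq_nil c B : rowcol_sq [::] c B = 0.
Proof. exact: big_pred0. Qed.

Lemma rowcol_sq_cons S c s B : val s \notin S ->
  rowcol_sq (val s :: S) c B = sqmod (B s c) + sqmod (B c s) + rowcol_sq S c B.
Proof.
move=> sS; rewrite /rowcol_sq (bigD1 s) ?mem_head //=; congr (_ + _).
by apply: eq_bigl => p; rewrite inE val_eqE; case: eqP => [->|]; rewrite ?(negbTE sS) ?andbT.
Qed.

Lemma off_sq_cons S c B : val c \notin S ->
  off_sq (val c :: S) B = off_sq S B + rowcol_sq S c B.
Proof.
move=> cS.
have memc (p : 'I_n) : (val p \in val c :: S) && (p != c) = (val p \in S).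
  by rewrite inE val_eqE; case: eqP => [->|]; rewrite ?(negbTE cS) ?andbT.
rewrite /off_sq (bigD1 c) ?mem_head //= (eq_bigl _ _ memc).
under [X in X + _]eq_bigl do rewrite eq_sym memc.
have rowc (p : 'I_n) : val p \in S ->
    \sum_(q : 'I_n | (val q \in val c :: S) && (p != q)) sqmod (B p q) =
    sqmod (B p c) + \sum_(q : 'I_n | (val q \in S) && (p != q)) sqmod (B p q).
  move=> pS; rewrite (bigD1 c) /=; last by rewrite mem_head; apply: contraNneq cS => <-.
  by congr (_ + _); apply: eq_bigl => q; rewrite -andbA [(p != q) && _]andbC andbA memc.
rewrite (eq_bigr _ rowc) [X in _ + X]big_split /rowcol_sq [in RHS]big_split /=.
lra.
Qed.

Lemma off_sq_small S B : (size S <= 1)%N -> off_sq S B = 0.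
Proof.
move=> hS; apply: big1 => p pS; apply: big1 => q /andP [qS]; case/negP; apply/eqP/val_inj.
by case: S hS pS qS => [|x [|]] //= _; rewrite !inE => /eqP -> /eqP ->.
Qed.

Lemma plane_split S (i j : 'I_n) : val i \in S -> val j \in S -> i != j ->
  exists T, [/\ S =i val i :: val j :: T, val i \notin val j :: T, val j \notin T
    & forall s : 'I_n, val s \in T -> (s != i) && (s != j)].
Proof.
move=> iS jS ij; exists [seq x <- S | (x != val i) && (x != val j)]; split.
- move=> x; rewrite !inE mem_filter.
  by case: (eqVneq x (val i)) => [->|] //=; case: (eqVneq x (val j)) => [->|].
- by rewrite inE mem_filter eqxx /= orbF val_eqE.
- by rewrite mem_filter eqxx andbF.
- by move=> s; rewrite mem_filter !val_eqE => /andP [].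
Qed.

End OffNorm.

Section Sweep.
Context {R : realType} {n : nat}.
Local Notation M := 'M[R[i]]_n.
Local Notation rot := ('I_n * 'I_n * M)%type.
Implicit Types (nu : R) (S T : seq nat) (B : M) (x : rot) (L : seq rot).

Lemma off_sq_step nu (i j : 'I_n) U S B : admissible nu i j U -> val i \in S -> val j \in S ->
  off_sq S B = off_sq S (jacobi_step i j U B) + (sqmod (B i j) + sqmod (B j i)).
Proof.
move=> hU iS jS; have [ij _ _ _] := hU.
have [T [eS iT jT hT]] := plane_split iS jS ij.
rewrite !(eq_off_sq _ eS) !off_sq_cons // !rowcol_sq_cons //.
have [-> ->] := jacobi_step_pivot i j U B; rewrite sqmod0 !add0r.
have -> : off_sq T (jacobi_step i j U B) = off_sq T B.
  by apply: eq_off_sq_mx => p q pT qT _; rewrite (jacobi_step_out hU) ?hT.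
have : rowcol_sq T j (jacobi_step i j U B) + rowcol_sq T i (jacobi_step i j U B) =
       rowcol_sq T j B + rowcol_sq T i B.
  rewrite -!big_split; apply: eq_bigr => s sT /=.
  have := jacobi_step_row_sqmod hU B (hT s sT).
  have := jacobi_step_col_sqmod hU B (hT s sT); lra.
lra.
Qed.

Lemma rowcol_sq_step nu (i j c : 'I_n) U S B : admissible nu i j U ->
  val i \in S -> val j \in S -> val c \notin S ->
  rowcol_sq S c (jacobi_step i j U B) = rowcol_sq S c B.
Proof.
move=> hU iS jS cS; have [ij _ _ _] := hU.
have [T [eS iT jT hT]] := plane_split iS jS ij.
have hc : (c != i) && (c != j).
  by apply/andP; split; apply: contraNneq cS => ->.
rewrite !(eq_rowcol_sq _ _ eS) !rowcol_sq_cons //.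
have -> : rowcol_sq T c (jacobi_step i j U B) = rowcol_sq T c B.
  by apply: eq_bigr => s sT; rewrite !(jacobi_step_out hU) ?hc ?hT.
have := jacobi_step_row_sqmod hU B hc; have := jacobi_step_col_sqmod hU B hc; lra.
Qed.

Definition rot_step x B : M := jacobi_step x.1.1 x.1.2 x.2 B.
Definition rot_pair x : nat * nat := (val x.1.1, val x.1.2).
Definition admissible_rot nu x : Prop := admissible nu x.1.1 x.1.2 x.2.
Definition pivot_sq x B : R := sqmod (B x.1.1 x.1.2) + sqmod (B x.1.2 x.1.1).

Definition sweep B L : M := foldl (fun B x => rot_step x B) B L.

Fixpoint annihilated B L : R :=
  if L is x :: L' then pivot_sq x B + annihilated (rot_step x B) L' else 0.

Definition pair_in S (p : nat * nat) : bool := (p.1 \in S) && (p.2 \in S).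

Lemma pivot_sq_ge0 x B : 0 <= pivot_sq x B.
Proof. by rewrite addr_ge0 ?sqmod_ge0. Qed.

Lemma annihilated_ge0 B L : 0 <= annihilated B L.
Proof. by elim: L B => //= x L IH B; rewrite addr_ge0 ?pivot_sq_ge0. Qed.

Lemma annihilated_cat B L1 L2 :
  annihilated B (L1 ++ L2) = annihilated B L1 + annihilated (sweep B L1) L2.
Proof. by elim: L1 B => [|x L1 IH] B /=; rewrite ?add0r // IH addrA. Qed.

Lemma annihilated_rcons B L x :
  annihilated B (rcons L x) = annihilated B L + pivot_sq x (sweep B L).
Proof. by rewrite -cats1 annihilated_cat /= addr0. Qed.

Section InPlanes.
Variables (nu : R) (S : seq nat) (L : seq rot).
Hypotheses (hL : {in L, forall x, admissible_rot nu x})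
           (LS : {in L, forall x, pair_in S (rot_pair x)}).

Lemma off_sq_sweep B : off_sq S B = off_sq S (sweep B L) + annihilated B L.
Proof.
elim: L B hL LS => [|x L' IH] B hL' LS' /=; first by rewrite addr0.
have /andP [iS jS] := LS' x (mem_head _ _).
rewrite (off_sq_step B (hL' x (mem_head _ _)) iS jS) (IH (rot_step x B)).
- by rewrite /pivot_sq addrAC -addrA.
- by move=> y yL; apply: hL'; rewrite inE yL orbT.
- by move=> y yL; apply: LS'; rewrite inE yL orbT.
Qed.

Lemma rowcol_sq_sweep c B : val c \notin S -> rowcol_sq S c (sweep B L) = rowcol_sq S c B.
Proof.
move=> cS; elim: L B hL LS => [|x L' IH] B hL' LS' //=.
have /andP [iS jS] := LS' x (mem_head _ _).
rewrite IH.
- exact: (rowcol_sq_step _ (hL' x (mem_head _ _)) iS jS cS).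
- by move=> y yL; apply: hL'; rewrite inE yL orbT.
- by move=> y yL; apply: LS'; rewrite inE yL orbT.
Qed.

End InPlanes.
End Sweep.

Section EliminationBounds.
Context {R : realType}.
Variable nu : R.
Hypothesis nu_gt0 : 0 < nu.
Implicit Types (z w a b d e : R[i]).

Lemma sqmod_solve_le z z' w a b : z' = w * a + z * b ->
  sqmod a <= 1 -> nu ^+ 2 <= sqmod b -> sqmod z <= 2 / nu ^+ 2 * (sqmod z' + sqmod w).
Proof.
move=> ez' ha hb; have nu2_gt0 : 0 < nu ^+ 2 by exact: exprn_gt0.
rewrite mulrAC ler_pdivlMr //; apply: le_trans (_ : sqmod z * sqmod b <= _).
  by rewrite ler_wpM2l ?sqmod_ge0.
have -> : sqmod z * sqmod b = sqmod (z' - w * a) by rewrite -sqmodM ez' addrC addKr.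
apply: le_trans (sqmodB_le _ _) _; rewrite sqmodM.
by have := sqmod_ge0 w; have := sqmod_ge0 a; have := sqmod_ge0 z'; nra.
Qed.

Hypothesis nu_le1 : nu <= 1.

Lemma sqmod_eliminate_le z z' w w' a b d e :
  z' = w * a + z * b -> w' = w * d + z * e ->
  sqmod a <= 1 -> sqmod b <= 1 -> sqmod e <= 1 -> nu ^+ 2 <= sqmod d ->
  sqmod z' <= 6 / nu ^+ 2 * (sqmod w' + sqmod z).
Proof.
move=> ez' ew' ha hb he hd.
have hw : sqmod w <= 2 / nu ^+ 2 * (sqmod w' + sqmod z).
  by apply: (sqmod_solve_le (a := e) (b := d)); rewrite // ew' addrC.
have hz' : sqmod z' <= 2 * (sqmod w + sqmod z).
  rewrite ez'; apply: le_trans (sqmodD_le _ _) _; rewrite !sqmodM.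
  have := sqmod_ge0 w; have := sqmod_ge0 z; have := sqmod_ge0 a; have := sqmod_ge0 b; nra.
have nu2_gt0 : 0 < nu ^+ 2 by exact: exprn_gt0.
have nu2_le1 : nu ^+ 2 <= 1 by rewrite expr_le1 // ltW.
move: hw; rewrite mulrAC ler_pdivlMr // => hw; rewrite mulrAC ler_pdivlMr //.
have := sqmod_ge0 z; have := sqmod_ge0 w'; have := sqmod_ge0 w; nra.
Qed.

End EliminationBounds.

Section StepBounds.
Context {R : realType} {n : nat}.
Local Notation M := 'M[R[i]]_n.
Variable nu : R.
Hypothesis nu_gt0 : 0 < nu.
Variables (q c : 'I_n) (U : M) (S : seq nat).
Hypotheses (hU : admissible nu q c U)
           (S_out : forall s : 'I_n, val s \in S -> (s != q) && (s != c)).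

Lemma rowcol_sq_before_step B : rowcol_sq S c B <=
  2 / nu ^+ 2 * (rowcol_sq S c (jacobi_step q c U B) + rowcol_sq S q B).
Proof.
rewrite /rowcol_sq -big_split mulr_sumr; apply: ler_sum => s sS /=.
have [_ Uqc_le1 _ _] := admissible_sqmod_le1 hU; have [_ _ _ [_ Ucc_ge]] := hU.
have row : jacobi_step q c U B s c = B s q * U q c + B s c * U c c.
  by rewrite (jacobi_step_row hU) ?S_out ?eqxx ?orbT.
have col : jacobi_step q c U B c s = B q s * (U q c)^* + B c s * (U c c)^*.
  by rewrite (jacobi_step_col hU) ?S_out ?eqxx ?orbT // mulrC [_ * B c s]mulrC.
have := sqmod_solve_le nu_gt0 row Uqc_le1 Ucc_ge.
have := sqmod_solve_le nu_gt0 col ltac:(by rewrite sqmodJ) ltac:(by rewrite sqmodJ).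
rewrite !mulrDr; lra.
Qed.

Hypothesis nu_le1 : nu <= 1.

Lemma rowcol_sq_after_step B : rowcol_sq S c (jacobi_step q c U B) <=
  6 / nu ^+ 2 * (rowcol_sq S q (jacobi_step q c U B) + rowcol_sq S c B).
Proof.
rewrite /rowcol_sq -big_split mulr_sumr; apply: ler_sum => s sS /=.
have [Uqq_le1 Uqc_le1 Ucq_le1 Ucc_le1] := admissible_sqmod_le1 hU.
have [_ _ _ [Uqq_ge _]] := hU.
have rowE (p : 'I_n) : (p == q) || (p == c) ->
    jacobi_step q c U B s p = B s q * U q p + B s c * U c p.
  by move=> hp; rewrite (jacobi_step_row hU) ?S_out.
have rowc := rowE c ltac:(by rewrite eqxx orbT); have rowq := rowE q ltac:(by rewrite eqxx).
have colE (p : 'I_n) : (p == q) || (p == c) ->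
    jacobi_step q c U B p s = B q s * (U q p)^* + B c s * (U c p)^*.
  by move=> hp; rewrite (jacobi_step_col hU) ?S_out // mulrC [_ * B c s]mulrC.
have colc := colE c ltac:(by rewrite eqxx orbT); have colq := colE q ltac:(by rewrite eqxx).
have := sqmod_eliminate_le nu_gt0 nu_le1 rowc rowq Uqc_le1 Ucc_le1 Ucq_le1 Uqq_ge.
have := sqmod_eliminate_le nu_gt0 nu_le1 colc colq;
  rewrite !sqmodJ => /(_ Uqc_le1 Ucc_le1 Ucq_le1 Uqq_ge).
rewrite !mulrDr; lra.
Qed.

End StepBounds.

Section Star.
Context {R : realType} {n : nat}.
Local Notation M := 'M[R[i]]_n.
Local Notation rot := ('I_n * 'I_n * M)%type.
Variable nu : R.
Hypotheses (nu_gt0 : 0 < nu) (nu_le1 : nu <= 1).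
Implicit Types (B : M) (x : rot) (L : seq rot).

(* [6 / nu ^+ 2] is the constant of [sqmod_eliminate_le]; it dominates the
   [2 / nu ^+ 2] of [sqmod_solve_le] as well. *)
Fixpoint star_const (m : nat) : R :=
  if m is m'.+1 then 6 / nu ^+ 2 * (1 + star_const m') else 0.

Lemma star_const_ge0 m : 0 <= star_const m.
Proof.
by elim: m => //= m IH; rewrite mulr_ge0 ?addr_ge0 ?divr_ge0 ?exprn_ge0 ?(ltW nu_gt0).
Qed.

Lemma star_const_step m (d a r k : R) : 0 <= d -> 0 <= a -> 0 <= r ->
  0 <= k -> k <= 6 / nu ^+ 2 ->
  d + k * (star_const m * a + r) <= star_const m.+1 * (d + a + r).
Proof.
move=> d0 a0 r0 k0 k_le /=; have K0 := star_const_ge0 m.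
have k6_ge1 : 1 <= 6 / nu ^+ 2.
  rewrite ler_pdivlMr ?exprn_gt0 // mul1r.
  have : nu ^+ 2 <= 1 by rewrite expr_le1 // ltW.
  lra.
set K := star_const m in K0 *; set k6 := 6 / nu ^+ 2 in k_le k6_ge1 *.
have := mulr_ge0 K0 a0; have := mulr_ge0 K0 d0; have := mulr_ge0 K0 r0; nra.
Qed.

Variable c : 'I_n.

Definition other x : 'I_n := if x.1.1 == c then x.1.2 else x.1.1.
Definition star_rot x : Prop := admissible_rot nu x /\ ((x.1.1 == c) || (x.1.2 == c)).
Definition leaves L : seq nat := [seq val (other x) | x <- L].

Lemma star_rot_plane x : star_rot x ->
  [/\ admissible nu (other x) c x.2, forall B, rot_step x B = jacobi_step (other x) c x.2 B,
      forall B, pivot_sq x B = sqmod (B (other x) c) + sqmod (B c (other x)) & other x != c].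
Proof.
rewrite /other /rot_step /pivot_sq; case: eqP => [<-|ne] [hU hc].
  have [ij _ _ _] := hU; split; rewrite 1?eq_sym //.
  - exact: admissible_sym.
  - by move=> B; rewrite jacobi_stepC.
  - by move=> B; rewrite addrC.
have {hc} <- : x.1.2 = c by case/orP: hc => /eqP.
by have [ij _ _ _] := hU.
Qed.

Lemma leaves_out L (q : 'I_n) : {in L, forall x, star_rot x} -> val q \notin leaves L ->
  forall s : 'I_n, val s \in leaves L -> (s != q) && (s != c).
Proof.
move=> hL qL s sL; rewrite (contraNneq _ qL) => [|<-] //=.
case/mapP: sL => x xL /val_inj ->.
by have [_ _ _] := star_rot_plane (hL x xL).
Qed.

Lemma star_sweep_before_le L B : {in L, forall x, star_rot x} -> uniq (leaves L) ->
  rowcol_sq (leaves L) c B <=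
  star_const (size L) * (annihilated B L + off_sq (leaves L) B).
Proof.
elim: L B => [|x L IH] B hL; first by rewrite rowcol_sq_nil mul0r.
rewrite [leaves _]/= [annihilated _ _]/= cons_uniq => /andP [qL uL].
have [hU stepE pivE _] := star_rot_plane (hL x (mem_head _ _)).
have hL' : {in L, forall y, star_rot y} by move=> y yL; apply: hL; rewrite inE yL orbT.
have L_out := leaves_out hL' qL.
rewrite rowcol_sq_cons // off_sq_cons // pivE stepE.
set q := other x in hU L_out *; set B' := jacobi_step q c x.2 B.
have off_eq : off_sq (leaves L) B' = off_sq (leaves L) B.
  by apply: eq_off_sq_mx => p r pL rL _; rewrite (jacobi_step_out hU) ?L_out.
set d := sqmod (B q c) + _; set r := rowcol_sq (leaves L) q B.
set a := annihilated B' L + off_sq (leaves L) B.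
have -> : d + annihilated B' L + (off_sq (leaves L) B + r) = d + a + r by rewrite /a !addrA.
have k0 : 0 <= 2 / nu ^+ 2 by rewrite divr_ge0 ?exprn_ge0 ?(ltW nu_gt0).
have k_le : 2 / nu ^+ 2 <= 6 / nu ^+ 2 by rewrite ler_pM2r ?invr_gt0 ?exprn_gt0 // ler_nat.
have d0 : 0 <= d by rewrite addr_ge0 ?sqmod_ge0.
have a0 : 0 <= a by rewrite addr_ge0 ?annihilated_ge0 ?off_sq_ge0.
apply: le_trans _ (star_const_step (size L) d0 a0 (rowcol_sq_ge0 _ _ _) k0 k_le).
rewrite lerD2l; apply: le_trans (rowcol_sq_before_step nu_gt0 hU L_out B) _.
by rewrite ler_wpM2l // lerD2r /a -off_eq IH.
Qed.

Lemma star_sweep_after_le L B : {in L, forall x, star_rot x} -> uniq (leaves L) ->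
  rowcol_sq (leaves L) c (sweep B L) <=
  star_const (size L) * (annihilated B L + off_sq (leaves L) (sweep B L)).
Proof.
elim/last_ind: L => [|L x IH] hL; first by rewrite rowcol_sq_nil mul0r.
rewrite /leaves map_rcons -/(leaves L) rcons_uniq size_rcons => /andP [qL uL].
have [hU stepE pivE _] := star_rot_plane (hL x ltac:(by rewrite mem_rcons mem_head)).
have hL' : {in L, forall y, star_rot y} by move=> y yL; apply: hL; rewrite mem_rcons inE yL orbT.
have L_out := leaves_out hL' qL.
have memq : rcons (leaves L) (val (other x)) =i val (other x) :: leaves L.
  by move=> z; rewrite mem_rcons.
rewrite (eq_rowcol_sq _ _ memq) (eq_off_sq _ memq) rowcol_sq_cons // off_sq_cons //.
rewrite /sweep foldl_rcons -/(sweep B L) annihilated_rcons stepE pivE.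
set q := other x in hU L_out *; set E' := sweep B L; set E := jacobi_step q c x.2 E'.
have [-> ->] : E q c = 0 /\ E c q = 0 by exact: jacobi_step_pivot.
have off_eq : off_sq (leaves L) E = off_sq (leaves L) E'.
  by apply: eq_off_sq_mx => p r pL rL _; rewrite (jacobi_step_out hU) ?L_out.
rewrite sqmod0 !add0r off_eq.
set d := sqmod (E' q c) + _; set r := rowcol_sq (leaves L) q E.
set a := annihilated B L + off_sq (leaves L) E'.
have -> : annihilated B L + d + (off_sq (leaves L) E' + r) = d + a + r.
  by rewrite /a; ring.
have k0 : 0 <= 6 / nu ^+ 2 by rewrite divr_ge0 ?exprn_ge0 ?(ltW nu_gt0).
have d0 : 0 <= d by rewrite addr_ge0 ?sqmod_ge0.
have a0 : 0 <= a by rewrite addr_ge0 ?annihilated_ge0 ?off_sq_ge0.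
apply: le_trans _ (star_const_step (size L) d0 a0 (rowcol_sq_ge0 _ _ _) k0 (lexx _)).
apply: le_trans (rowcol_sq_after_step nu_gt0 hU L_out nu_le1 E') _.
rewrite -[X in X <= _]add0r lerD // ler_wpM2l // addrC lerD2r.
exact: IH.
Qed.

End Star.

Definition other_nat (c : nat) (p : nat * nat) : nat := if p.1 == c then p.2 else p.1.

Definition star_on (c : nat) (P : seq (nat * nat)) (S : seq nat) : Prop :=
  perm_eq [seq other_nat c p | p <- P] S /\ {in P, forall p, (p.1 == c) || (p.2 == c)}.

(* A recursive form of the orderings in C_sp: index [c] is split off, and its
   pivots (c, s) come all after or all before an ordering of the other indices. *)
Inductive serial : seq nat -> seq (nat * nat) -> Prop :=
| serial_small S : (size S <= 1)%N -> serial S [::]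
| serial_star_after S c S' O P :
    perm_eq S (c :: S') -> serial S' O -> star_on c P S' -> serial S (O ++ P)
| serial_star_before S c S' O P :
    perm_eq S (c :: S') -> serial S' O -> star_on c P S' -> serial S (P ++ O).

Lemma star_on_pairs S c S' P : perm_eq S (c :: S') -> uniq S -> star_on c P S' ->
  {in P, forall p, [&& p.1 \in S, p.2 \in S & p.1 != p.2]}.
Proof.
move=> eS uS [hP hc] p pP; have /andP [cS' _] : uniq (c :: S') by rewrite -(perm_uniq eS).
have memS z : z \in S = (z == c) || (z \in S') by rewrite (perm_mem eS) inE.
have : other_nat c p \in S' by rewrite -(perm_mem hP) map_f.
rewrite /other_nat; move: (hc p pP); case: eqP => [-> _|_ /= /eqP ->] oS.
  by rewrite !memS eqxx oS orbT; apply: contraNneq cS' => ->.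
by rewrite !memS eqxx oS orbT; apply: contraNneq cS' => <-.
Qed.

Lemma serial_pairs S O : uniq S -> serial S O ->
  {in O, forall p, [&& p.1 \in S, p.2 \in S & p.1 != p.2]}.
Proof.
move=> uS sO; elim: sO uS => {S O} [S _ _ p //|S c S' O P eS _ IH hP uS|S c S' O P eS _ IH hP uS].
all: have /andP [_ uS'] : uniq (c :: S') by rewrite -(perm_uniq eS).
all: have memS z : z \in S' -> z \in S by move=> zS; rewrite (perm_mem eS) inE zS orbT.
all: move=> p; rewrite mem_cat => /orP [] pO; rewrite ?(star_on_pairs eS uS hP pO) //.
all: by case/and3P: (IH uS' p pO) => /memS -> /memS -> ->.
Qed.

Lemma map_eq_cat (T U : Type) (f : T -> U) (s : seq T) (u1 u2 : seq U) :
  map f s = u1 ++ u2 ->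
  exists s1 s2, [/\ s = s1 ++ s2, map f s1 = u1 & map f s2 = u2].
Proof.
move=> fs; exists (take (size u1) s), (drop (size u1) s).
by rewrite cat_take_drop map_take map_drop fs take_size_cat // drop_size_cat.
Qed.

Lemma prop_in_cat (T : eqType) (P : T -> Prop) (s1 s2 : seq T) :
  {in s1 ++ s2, forall x, P x} -> {in s1, forall x, P x} /\ {in s2, forall x, P x}.
Proof. by move=> hs; split=> x xs; apply: hs; rewrite mem_cat xs ?orbT. Qed.

Section SerialBound.
Context {R : realType} {n : nat}.
Local Notation M := 'M[R[i]]_n.
Local Notation rot := ('I_n * 'I_n * M)%type.
Variable nu : R.
Hypotheses (nu_gt0 : 0 < nu) (nu_le1 : nu <= 1).

Fixpoint off_const (m : nat) : R :=
  if m is m'.+1 then (1 + off_const m') * (1 + star_const nu m') else 0.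

Lemma off_const_ge0 m : 0 <= off_const m.
Proof.
by elim: m => //= m IH; rewrite mulr_ge0 ?addr_ge0 ?star_const_ge0.
Qed.

Lemma star_on_rot (c : 'I_n) (S : seq nat) (P : seq (nat * nat)) (L : seq rot) :
  star_on c P S -> map rot_pair L = P -> {in L, forall x, admissible_rot nu x} ->
  {in L, forall x, star_rot nu c x} /\ perm_eq (leaves c L) S.
Proof.
move=> [hP hc] eP hL.
have eleaves : leaves c L = map (other_nat c) P.
  by rewrite -eP -map_comp; apply: eq_map => x; rewrite /other /other_nat /= val_eqE; case: ifP.
split; last by rewrite eleaves.
move=> x xL; split; first exact: hL.
by have := hc (rot_pair x); rewrite -eP map_f // -!val_eqE => /(_ isT).
Qed.

Lemma serial_rot_in S O (L : seq rot) : uniq S -> serial S O -> map rot_pair L = O ->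
  {in L, forall x, pair_in S (rot_pair x)}.
Proof.
move=> uS sO eL x xL; have /(serial_pairs uS sO)/and3P [? ? _] : rot_pair x \in O.
  by rewrite -eL map_f.
exact/andP.
Qed.

Section SerialStep.
Variables (c : 'I_n) (S : seq nat) (L1 L2 : seq rot) (C : R).
Hypotheses (cS : val c \notin S) (uS : uniq S) (C_ge0 : 0 <= C)
  (hL1 : {in L1, forall x, admissible_rot nu x})
  (L1S : {in L1, forall x, pair_in S (rot_pair x)})
  (hL2 : {in L2, forall x, star_rot nu c x}) (leavesS : perm_eq (leaves c L2) S)
  (IH : forall B, off_sq S B <= C * annihilated B L1).
Let K := star_const nu (size S).
Let K_ge0 : 0 <= K := star_const_ge0 nu_gt0 _.
Let eleaves : leaves c L2 =i S := perm_mem leavesS.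
Let uleaves : uniq (leaves c L2). Proof. by rewrite (perm_uniq leavesS). Qed.
Let size_L2 : size L2 = size S. Proof. by rewrite -(perm_size leavesS) size_map. Qed.

Lemma off_sq_star_after_le B :
  off_sq (val c :: S) B <= (1 + C) * (1 + K) * annihilated B (L1 ++ L2).
Proof.
rewrite off_sq_cons // annihilated_cat; set B1 := sweep B L1.
have star := star_sweep_before_le nu_gt0 nu_le1 B1 hL2 uleaves.
rewrite (eq_rowcol_sq _ _ eleaves) (eq_off_sq _ eleaves) size_L2 -/K in star.
rewrite -(rowcol_sq_sweep hL1 L1S B cS) -/B1.
have := off_sq_sweep hL1 L1S B; rewrite -/B1 => split.
have ih := IH B.
set a1 := annihilated B L1 in split ih *; set a2 := annihilated B1 L2 in star *.
have := annihilated_ge0 B L1; have := annihilated_ge0 B1 L2; rewrite -/a1 -/a2 => a2_ge0 a1_ge0.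
have o1 : K * off_sq S B1 <= K * (C * a1).
  by rewrite ler_wpM2l //; have := off_sq_ge0 S B1; lra.
have := mulr_ge0 K_ge0 a1_ge0; have := mulr_ge0 C_ge0 a2_ge0.
have := mulr_ge0 (mulr_ge0 K_ge0 C_ge0) a2_ge0; have := mulr_ge0 K_ge0 a2_ge0.
rewrite mulrDr in star; nra.
Qed.

Lemma off_sq_star_before_le B :
  off_sq (val c :: S) B <= (1 + C) * (1 + K) * annihilated B (L2 ++ L1).
Proof.
have hL2' : {in L2, forall x, admissible_rot nu x} by move=> x /hL2 [].
have L2S : {in L2, forall x, pair_in (val c :: S) (rot_pair x)}.
  move=> x xL; have [_ hc] := hL2 xL.
  have : val (other c x) \in S by rewrite -eleaves (map_f (fun y => val (other c y))).
  rewrite /pair_in /other /= !inE; case: eqP hc => [<- _|_ /= /eqP <-] -> ;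
    by rewrite eqxx ?orbT.
rewrite annihilated_cat (off_sq_sweep hL2' L2S B) off_sq_cons //; set B1 := sweep B L2.
have star := star_sweep_after_le nu_gt0 nu_le1 B hL2 uleaves.
rewrite (eq_rowcol_sq _ _ eleaves) (eq_off_sq _ eleaves) size_L2 -/K -/B1 in star.
have ih := IH B1.
set a1 := annihilated B1 L1 in ih *; set a2 := annihilated B L2 in star *.
have := annihilated_ge0 B1 L1; have := annihilated_ge0 B L2; rewrite -/a1 -/a2 => a2_ge0 a1_ge0.
have o1 : K * off_sq S B1 <= K * (C * a1) by rewrite ler_wpM2l.
have := mulr_ge0 K_ge0 a1_ge0; have := mulr_ge0 C_ge0 a2_ge0.
have := mulr_ge0 (mulr_ge0 K_ge0 C_ge0) a2_ge0; have := mulr_ge0 K_ge0 a2_ge0.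
rewrite mulrDr in star; nra.
Qed.

End SerialStep.

Lemma off_sq_serial_le S O : uniq S -> serial S O -> {subset S <= iota 0 n} ->
  forall (L : seq rot) B, map rot_pair L = O -> {in L, forall x, admissible_rot nu x} ->
  off_sq S B <= off_const (size S) * annihilated B L.
Proof.
move=> uS sO; elim: sO uS => {S O} [S hS|S c S' O P eS sO' IH hP|S c S' O P eS sO' IH hP]
  uS Sn L B eL hL.
  by rewrite off_sq_small // mulr_ge0 ?off_const_ge0 ?annihilated_ge0.
all: have /andP [cS' uS'] : uniq (c :: S') by rewrite -(perm_uniq eS).
all: have S'n : {subset S' <= iota 0 n}.
all: try by move=> z zS'; apply: Sn; rewrite (perm_mem eS) inE zS' orbT.
all: have /Sn : c \in S by rewrite (perm_mem eS) mem_head.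
all: rewrite mem_iota /= => cn; pose cI := Ordinal cn.
all: rewrite (eq_off_sq _ (perm_mem eS) : _ = off_sq (val cI :: S') B) (perm_size eS) /=.
- have [L1 [L2 [eL12 eL1 eL2]]] := map_eq_cat eL; subst L; have [hL1 hL2] := prop_in_cat hL.
  have [starL2 leavesS] := star_on_rot (c := cI) hP eL2 hL2.
  exact: (off_sq_star_after_le (c := cI) cS' uS' (off_const_ge0 _) hL1
    (serial_rot_in uS' sO' eL1) starL2 leavesS (fun B' => IH uS' S'n L1 B' eL1 hL1) B).
- have [L2 [L1 [eL12 eL2 eL1]]] := map_eq_cat eL; subst L; have [hL2 hL1] := prop_in_cat hL.
  have [starL2 leavesS] := star_on_rot (c := cI) hP eL2 hL2.
  exact: (off_sq_star_before_le (c := cI) cS' uS' (off_const_ge0 _) starL2 leavesS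
    (fun B' => IH uS' S'n L1 B' eL1 hL1) B).
Qed.

End SerialBound.

Lemma star_on_col c (sig S : seq nat) : perm_eq sig S -> c \notin S ->
  star_on c [seq (s, c) | s <- sig] S /\ star_on c (rev [seq (s, c) | s <- sig]) S.
Proof.
move=> eS cS; have eO : map (other_nat c) [seq (s, c) | s <- sig] = sig.
  rewrite -map_comp -[RHS]map_id; apply/eq_in_map => s sig_s /=.
  by rewrite /other_nat /=; case: eqP => // sc; move: cS; rewrite -sc -(perm_mem eS) sig_s.
do !split; rewrite ?map_rev ?eO ?perm_rev // => p; rewrite ?mem_rev => /mapP [s _ ->].
all: by rewrite eqxx orbT.
Qed.

Lemma star_on_row c (sig S : seq nat) : perm_eq sig S ->
  star_on c [seq (c, s) | s <- sig] S /\ star_on c (rev [seq (c, s) | s <- sig]) S.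
Proof.
move=> eS; have eO : map (other_nat c) [seq (c, s) | s <- sig] = sig.
  by rewrite -map_comp -[RHS]map_id; apply/eq_map => s; rewrite /other_nat /= eqxx.
do !split; rewrite ?map_rev ?eO ?perm_rev // => p; rewrite ?mem_rev => /mapP [s _ ->].
all: by rewrite eqxx.
Qed.

Definition column_cyclic (tau : nat -> seq nat) m : seq (nat * nat) :=
  flatten [seq [seq (s, t) | s <- tau t] | t <- iota 1 m].

Definition row_cyclic (tau : nat -> seq nat) k l : seq (nat * nat) :=
  flatten [seq [seq (i, s) | s <- tau i] | i <- rev (iota k l)].

Lemma column_cyclic_serial tau m :
  (forall t, (1 <= t <= m)%N -> perm_eq (tau t) (iota 0 t)) ->
  serial (iota 0 m.+1) (column_cyclic tau m) /\
  serial (iota 0 m.+1) (rev (column_cyclic tau m)).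
Proof.
elim: m => [|m IH] htau; first by split; apply: serial_small.
have [sO sOr] : serial (iota 0 m.+1) (column_cyclic tau m) /\
                serial (iota 0 m.+1) (rev (column_cyclic tau m)).
  by apply: IH => t /andP [t1 tm]; apply: htau; rewrite t1 ltnW.
have -> : column_cyclic tau m.+1 = column_cyclic tau m ++ [seq (s, m.+1) | s <- tau m.+1].
  rewrite /column_cyclic (_ : iota 1 m.+1 = iota 1 m ++ [:: m.+1]).
    by rewrite map_cat flatten_cat /= cats0.
  by have := iotaD 1 m 1; rewrite addn1 add1n.
have eS : perm_eq (iota 0 m.+2) (m.+1 :: iota 0 m.+1).
  by rewrite -[m.+2]addn1 iotaD perm_catC.
have cS : m.+1 \notin iota 0 m.+1 by rewrite mem_iota ltnn andbF.
have [after before] := star_on_col (htau m.+1 (leqnn _)) cS.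
rewrite rev_cat.
by split; [apply: serial_star_after eS sO after | apply: serial_star_before eS sOr before].
Qed.

Lemma row_cyclic_serial (tau : nat -> seq nat) n l k : (k + l).+1 = n ->
  (forall i, (i < n.-1)%N -> perm_eq (tau i) (iota i.+1 (n - i.+1))) ->
  serial (iota k l.+1) (row_cyclic tau k l) /\
  serial (iota k l.+1) (rev (row_cyclic tau k l)).
Proof.
elim: l k => [|l IH] k kl htau; first by split; apply: serial_small.
have [sO sOr] := IH k.+1 ltac:(by rewrite addSnnS) htau.
have -> : row_cyclic tau k l.+1 = row_cyclic tau k.+1 l ++ [seq (k, s) | s <- tau k].
  by rewrite /row_cyclic /= rev_cons -cats1 map_cat flatten_cat /= cats0.
have eS : perm_eq (iota k l.+2) (k :: iota k.+1 l.+1) by [].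
have tau_k : perm_eq (tau k) (iota k.+1 l.+1).
  by have := htau k ltac:(by rewrite -kl /=; lia); rewrite -kl (_ : _ - _ = l.+1)%N //; lia.
have [after before] := star_on_row k tau_k.
by rewrite rev_cat; split; [apply: serial_star_after eS sO after | apply: serial_star_before eS sOr before].
Qed.

Lemma serial_Csp n O : (1 <= n)%N -> in_Csp n O -> serial (iota 0 n) O.
Proof.
case: n => // m _.
have col tau : (forall t, (1 <= t < m.+1)%N -> perm_eq (tau t) (iota 0 t)) ->
    serial (iota 0 m.+1) (column_cyclic tau m) /\
    serial (iota 0 m.+1) (rev (column_cyclic tau m)).
  by move=> htau; apply: column_cyclic_serial => t /andP [t1 tm]; apply: htau; rewrite t1.
have row tau := @row_cyclic_serial tau m.+1 m 0 erefl.
case=> [[tau [htau ->]]|[[tau [htau eO]]|[[tau [htau ->]]|[tau [htau eO]]]]].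
- by case: (col tau htau).
- by rewrite -(revK O) eO; case: (col tau htau).
- by case: (row tau htau).
- by rewrite -(revK O) eO; case: (row tau htau).
Qed.

Lemma upairsS n : upairs n.+1 = upairs n ++ [seq (s, n) | s <- iota 0 n].
Proof.
rewrite /upairs (_ : iota 0 n.+1 = iota 0 n ++ [:: n]) ?map_cat ?flatten_cat /= ?cats0 //.
by have := iotaD 0 n 1; rewrite addn1 add0n.
Qed.

Lemma mem_upairs n p : (p \in upairs n) = (p.1 < p.2 < n)%N.
Proof.
case: p => a b; elim: n => [|n IH] /=; first by rewrite /upairs /= ltn0 andbF.
rewrite upairsS mem_cat IH /= ltnS; apply/orP/andP => [[/andP [ab bn]|]|[ab]].
- by rewrite ab ltnW.
- by case/mapP=> s; rewrite mem_iota => /andP [_ sn] [-> ->].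
rewrite leq_eqVlt => /orP [/eqP bn|bn]; last by left; rewrite ab.
by right; apply/mapP; exists a; rewrite ?mem_iota -?bn.
Qed.

Lemma upairs_uniq n : uniq (upairs n).
Proof.
elim: n => // n IH; rewrite upairsS cat_uniq IH map_inj_uniq ?iota_uniq; last by move=> ? ? [].
by rewrite andbT; apply/hasPn => p /mapP [s _ ->]; rewrite mem_upairs /= ltnn andbF.
Qed.

Lemma size_upairs n : size (upairs n) = dimN n.
Proof.
rewrite /dimN divn2 -bin2; elim: n => // n IH.
by rewrite upairsS size_cat IH size_map size_iota binS bin1 addnC.
Qed.

Lemma nth_upairs n k : (k < dimN n)%N ->
  let p := nth (0, 0)%N (upairs n) k in (p.1 < p.2 < n)%N.
Proof. by move=> hk /=; rewrite -mem_upairs mem_nth // size_upairs. Qed.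

Section Vectorization.
Context {R : realType} {n : nat}.
Local Notation M := 'M[R[i]]_n.

Lemma mentry_lt (A : M) s t (hs : (s < n)%N) (ht : (t < n)%N) :
  mentry A s t = A (Ordinal hs) (Ordinal ht).
Proof.
by rewrite /mentry insubT /= insubT /=; congr (A _ _); apply: val_inj.
Qed.

Lemma mentry_ord (A : M) (p q : 'I_n) : mentry A p q = A p q.
Proof. by case: p q => [p hp] [q hq]; rewrite mentry_lt. Qed.

Lemma off_sq_iota (A : M) : off_sq (iota 0 n) A =
  \sum_(t : 'I_n) \sum_(s : 'I_n | (s < t)%N) (sqmod (A s t) + sqmod (A t s)).
Proof.
have in_iota (p : 'I_n) : val p \in iota 0 n by rewrite mem_iota ltn_ord.
transitivity (\sum_(p : 'I_n) \sum_(q : 'I_n | p != q) sqmod (A p q)).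
  by apply: eq_big => [p|p _]; rewrite ?in_iota //; apply: eq_bigl => q; rewrite in_iota.
have split_neq (p : 'I_n) : \sum_(q : 'I_n | p != q) sqmod (A p q) =
    \sum_(q : 'I_n | (q < p)%N) sqmod (A p q) + \sum_(q : 'I_n | (p < q)%N) sqmod (A p q).
  rewrite (bigID (fun q : 'I_n => (q < p)%N)) /=.
  by congr (_ + _); apply: eq_bigl => q; rewrite -val_eqE /=; case: ltngtP.
rewrite (eq_bigr _ (fun p _ => split_neq p)) big_split /=.
under [X in _ + X]eq_bigr do rewrite big_mkcond.
rewrite [X in _ + X]exchange_big /=.
under [X in _ + X]eq_bigr do rewrite -big_mkcond.
by rewrite -big_split; apply: eq_bigr => t _; rewrite -big_split /=; apply: eq_bigr => *; rewrite addrC.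
Qed.

Lemma vnorm2_ve (A : M) : vnorm2 (ve A) = Num.sqrt (off_sq (iota 0 n) A).
Proof.
rewrite /vnorm2; congr Num.sqrt; under eq_bigr do rewrite cmod_sqr.
rewrite big_split_ord /=; set N := dimN n.
pose g (p : nat * nat) := sqmod (mentry A p.1 p.2) + sqmod (mentry A p.2 p.1).
transitivity (\sum_(p <- upairs n) g p).
  rewrite (big_nth (0, 0)%N) size_upairs big_mkord -big_split /=.
  apply: eq_bigr => k _; rewrite !mxE /= ltn_ord ltnNge leq_addr /= addKn.
  by [].
have iota0 m : iota 0 m = index_iota 0 m by rewrite /index_iota subn0.
rewrite /upairs big_flatten big_map /= off_sq_iota iota0 big_mkord.
apply: eq_bigr => t _; rewrite big_map iota0 big_mkord.
rewrite (big_ord_widen _ (fun s => g (s, val t)) (ltnW (ltn_ord t))).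
by apply: eq_bigr => s _; rewrite /g /= !mentry_ord.
Qed.

Lemma ve_surj (x : 'cV[R[i]]_(dimN n + dimN n)) : exists A : M, ve A = x.
Proof.
set N := dimN n.
pose xf (k : nat) := if insub k is Some k' then x k' 0 else 0.
have xfE (k : 'I_(N + N)) : xf k = x k 0 by rewrite /xf valK.
exists (\matrix_(p, q) (if (p < q)%N then xf (index (val p, val q) (upairs n))
   else if (q < p)%N then xf (N + index (val q, val p) (upairs n))%N else 0)).
apply/matrixP => k z; rewrite (ord1 z) !mxE.
case: ifP => hk /=.
  have := nth_upairs hk; set p := nth _ _ _ => /andP [p12 p2n].
  rewrite (mentry_lt _ (ltn_trans p12 p2n) p2n) mxE /= p12 -surjective_pairing.
  by rewrite index_uniq ?size_upairs ?upairs_uniq // xfE.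
have Nk : (N <= k)%N by rewrite leqNgt hk.
have hk' : (k - N < N)%N by rewrite ltn_subLR // ltn_ord.
have := nth_upairs hk'; set p := nth _ _ _ => /andP [p12 p2n].
rewrite (mentry_lt _ p2n (ltn_trans p12 p2n)) mxE /= ltnNge (ltnW p12) p12 /=.
by rewrite -surjective_pairing index_uniq ?size_upairs ?upairs_uniq // subnKC // xfE.
Qed.

End Vectorization.

Section JacobiOperators.
Context {R : realType} {n : nat}.
Local Notation M := 'M[R[i]]_n.
Local Notation MM := 'M[R[i]]_(dimN n + dimN n).
Local Notation rot := ('I_n * 'I_n * M)%type.

Lemma rotm_admissible (nu phi alpha : R) (i j : 'I_n) : i != j -> 0 <= nu ->
  nu <= `|cos phi| -> admissible nu i j (rotm n i j phi alpha).
Proof.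
move=> ij nu_ge0 nu_le.
have nij : (val i == val j) = false by rewrite val_eqE (negbTE ij).
have nji : (val j == val i) = false by rewrite eq_sym.
set U := rotm n i j phi alpha.
have Uii : U i i = (cos phi)%:C by rewrite mxE !eqxx.
have Ujj : U j j = (cos phi)%:C by rewrite mxE !eqxx orbT.
have Uij : U i j = - (cexpi alpha * (sin phi)%:C) by rewrite mxE !eqxx nij nji.
have Uji : U j i = cexpi (- alpha) * (sin phi)%:C by rewrite mxE !eqxx nij nji.
have sqmod_cexpi beta : sqmod (cexpi beta) = 1 by rewrite /sqmod /= cos2Dsin2.
split => //.
- move=> p q hpq; rewrite mxE.
  by case/orP: hpq => /andP [/negbTE ri /negbTE rj]; rewrite -!val_eqE in ri rj;
    rewrite ?ri ?rj ?andbF //=; case: (p == q).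
- split.
  + by rewrite Uii Uij sqmodN sqmodM sqmod_cexpi mul1r !sqmod_real cos2Dsin2.
  + by rewrite Uji Ujj sqmodM sqmod_cexpi mul1r !sqmod_real addrC cos2Dsin2.
  + rewrite Uii Uij Uji Ujj /cexpi cosN sinN.
    by apply/eqP; rewrite eq_complex /=; apply/andP; split; apply/eqP; ring.
- rewrite Uii Ujj sqmod_real -[cos phi ^+ 2]real_normK ?num_real //.
  by split; rewrite !expr2 ler_pM.
Qed.

Lemma foldl_mulmx (Ms : seq MM) (acc : MM) :
  foldl (fun acc M => M *m acc) acc Ms = foldl (fun acc M => M *m acc) 1%:M Ms *m acc.
Proof.
elim: Ms acc => [|Mx Ms IH] acc /=; first by rewrite mul1mx.
by rewrite IH [in RHS]IH mulmx1 mulmxA.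
Qed.

Lemma jacobi_class_sweep (nu : R) O (J : MM) : 0 <= nu ->
  {in O, forall p, [&& p.1 \in iota 0 n, p.2 \in iota 0 n & p.1 != p.2]} ->
  jacobi_class nu O J ->
  exists L : seq rot, [/\ map rot_pair L = O, {in L, forall x, admissible_rot nu x}
    & forall A : M, J *m ve A = ve (sweep A L)].
Proof.
move=> nu_ge0 hO [Ms [szMs [hMs ->]]].
elim: O Ms hO szMs hMs => [|o O IH] [|Mx Ms] //= hO.
  by exists [::]; split => // A; rewrite mul1mx.
move=> [szMs] hMs.
have /and3P [] := hO o (mem_head _ _); rewrite !mem_iota /= => o1n o2n o12.
have [L [eL hL hJ]] := IH Ms (fun p pO => hO p (mem_behead (s := o :: O) pO)) szMs
  (fun k => hMs k.+1).
have [phi [alpha [nu_le hann]]] := hMs 0%N isT.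
pose i := Ordinal o1n; pose j := Ordinal o2n.
have hU : admissible nu i j (rotm n i j phi alpha) by apply: rotm_admissible.
exists ((i, j, rotm n i j phi alpha) :: L); split.
- by rewrite /= eL /rot_pair /= -surjective_pairing.
- by move=> x; rewrite inE => /predU1P [->|/hL].
- by move=> A; rewrite foldl_mulmx mulmx1 -mulmxA hann hJ.
Qed.

End JacobiOperators.

Lemma vnorm2_0 (R : realType) m : vnorm2 (0 : 'cV[R[i]]_m) = 0.
Proof. by rewrite /vnorm2 big1 ?sqrtr0 // => k _; rewrite mxE cmod_sqr sqmod0. Qed.

Lemma spec_norm_le (R : realType) m (A : 'M[R[i]]_m) (b : R) :
  (forall x, vnorm2 x <= 1 -> vnorm2 (A *m x) <= b) -> spec_norm A <= b.
Proof.
move=> hA; apply: ge_sup; last by move=> _ [x /hA ? <-].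
by exists (vnorm2 (A *m 0)), 0 => //=; rewrite vnorm2_0 ler01.
Qed.

Lemma off_sq_sweep_contract (R : realType) n (nu : R) S O (L : seq ('I_n * 'I_n * 'M[R[i]]_n))
  (A : 'M[R[i]]_n) : 0 < nu -> nu <= 1 ->
  uniq S -> serial S O -> {subset S <= iota 0 n} ->
  map rot_pair L = O -> {in L, forall x, admissible_rot nu x} ->
  off_sq S (sweep A L) <= (1 - (1 + off_const nu (size S))^-1) * off_sq S A.
Proof.
move=> nu_gt0 nu_le1 uS sO Sn eL hL.
have bound := off_sq_serial_le nu_gt0 nu_le1 uS sO Sn A eL hL.
have split := off_sq_sweep hL (serial_rot_in uS sO eL) A.
have C_ge0 := off_const_ge0 nu_gt0 (size S).
set C := off_const nu (size S) in bound C_ge0 *.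
have C1_gt0 : 0 < 1 + C by rewrite ltr_pwDl.
rewrite mulrBl mul1r lerBrDr split lerD2l ler_pdivrMl // mulrDl mul1r -split.
by have := annihilated_ge0 A L; lra.
Qed.

Theorem theorem3p3 (R : realType) (n : nat) (hn : (2 <= n)%N) (nu : R)
  (hnu : 0 < nu <= 1) :
  exists mu : R, 0 <= mu < 1 /\
    forall (O : seq (nat * nat)), in_Csp n O ->
    forall J : 'M[R[i]]_(dimN n + dimN n), @jacobi_class R n nu O J ->
      @spec_norm R (dimN n + dimN n) J <= mu.
Proof.
have [nu_gt0 nu_le1] := andP hnu.
set q := (1 + off_const nu (size (iota 0 n)))^-1.
have q_gt0 : 0 < q by rewrite invr_gt0 ltr_pwDl ?off_const_ge0.
have q_le1 : q <= 1 by rewrite invf_le1 ?lerDl ?off_const_ge0 // ltr_pwDl ?off_const_ge0.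
exists (Num.sqrt (1 - q)); split.
  by rewrite sqrtr_ge0 /= -{2}sqrtr1 ltr_sqrt //; lra.
move=> O hO J hJ; have sO := serial_Csp (ltnW hn) hO.
have [L [eL hL hJL]] := jacobi_class_sweep (ltW nu_gt0) (serial_pairs (iota_uniq 0 n) sO) hJ.
apply: spec_norm_le => x; have [A <-] := ve_surj x.
rewrite hJL !vnorm2_ve -{1}sqrtr1 !ler_sqrt // ?subr_ge0 // => off_le1.
apply: le_trans (off_sq_sweep_contract A nu_gt0 nu_le1 (iota_uniq 0 n) sO _ eL hL) _ => //.
by rewrite ler_piMr ?subr_ge0.
Qed.
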